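(* Let $k\ge 2$ and let $N$ be a power of two. Let $A_1,\dots,A_k$ be integer sequences, each split into $N$ blocks $A_i=\alpha_i^0\alpha_i^1\cdots\alpha_i^{N-1}$, such that for all $j_1,\dots,j_k\in\{0,\dots,N-1\}$, $\mathrm{lcis}(\alpha_1^0\cdots\alpha_1^{j_1},\dots,\alpha_k^0\cdots\alpha_k^{j_k})=j_1+\cdots+j_k+N$. Let $s$ be the largest element appearing in $A_1,\dots,A_k$. For $i\in\{1,\dots,k\}$ let $T_i^0$ be the increasingly sorted sequence of all numbers $2s+x$ with $x\in\{1,\dots,2^k-1\}$ whose $i$-th bit in binary representation is $0$, and $T_i^1$ the increasingly sorted sequence of those with $i$-th bit equal to $1$. Define $B_i=\beta_i^0\cdots\beta_i^{2N-1}$ by $\beta_i^{2j}=\mathrm{inflate}(\alpha_i^j)\circ T_i^0$ and $\beta_i^{2j+1}=T_i^1$ for $j\in\{0,\dots,N-1\}$. Then for all $j_1,\dots,j_k\in\{0,1,\dots,2N-1\}$, $$\mathrm{lcis}(\beta_1^0\cdots\beta_1^{j_1},\beta_2^0\cdots\beta_2^{j_2},\dots,\beta_k^0\cdots\beta_k^{j_k})=j_1+j_2+\cdots+j_k+2N.$$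
   Context: $\mathrm{lcis}(X_1,\dots,X_k)$ denotes the length of the longest strictly increasing sequence that is a subsequence of every $X_i$. For $A=\langle a_0,\dots,a_{n-1}\rangle$, $\mathrm{inflate}(A)=\langle 2a_0-1,2a_0,\dots,2a_{n-1}-1,2a_{n-1}\rangle$; $\circ$ and juxtaposition denote concatenation. *)

From mathcomp Require Import all_boot all_order all_algebra.
Set Implicit Arguments. Unset Strict Implicit. Unset Printing Implicit Defensive.
Import Order.TTheory GRing.Theory Num.Theory.
Local Open Scope ring_scope.

Definition common_incr_subseq (Xs : seq (seq int)) (s : seq int) : Prop :=
  sorted (fun a b : int => a < b) s /\ all (fun X => subseq s X) Xs.

Definition lcis_is (Xs : seq (seq int)) (n : nat) : Prop :=
  (exists s, common_incr_subseq Xs s /\ size s = n) /\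
  (forall s, common_incr_subseq Xs s -> (size s <= n)%N).

Definition inflate (A : seq int) : seq int :=
  flatten [seq [:: 2 * a - 1; 2 * a] | a <- A].

Definition prefix_blocks (blk : nat -> seq int) (j : nat) : seq int :=
  flatten [seq blk l | l <- iota 0 j.+1].

(* T_i^b : increasing sequence of 2s+x, x in {1..2^k-1}, whose i-th bit
   (i : 'I_k, 0-indexed from the least significant bit) equals b *)
Definition Tseq (k : nat) (s : int) (i : nat) (b : bool) : seq int :=
  [seq 2 * s + (x%:Z) | x <- iota 1 (2 ^ k - 1)%N & odd (x %/ 2 ^ i) == b].

Definition beta (k : nat) (s : int) (alpha : nat -> seq int) (i : nat) (j : nat)
  : seq int :=
  if odd j then Tseq k s i true else inflate (alpha j./2) ++ Tseq k s i false.

From mathcomp Require Import all_boot all_order all_algebra zify.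
Import Order.TTheory GRing.Theory Num.Theory.
Set Implicit Arguments. Unset Strict Implicit. Unset Printing Implicit Defensive.

(* Split a common increasing subsequence of the B_i-prefixes at 2s.  The low part
   lies in the inflated alpha-blocks; halving it (v |-> ceil(v/2)) yields a common
   increasing subsequence of alpha-prefixes ending at blocks t_i/2, so it has at
   most 2 (sum_i t_i/2 + N) elements.  Read as numbers x < 2^k, the high part meets
   in coordinate i only the blocks T_i^(q mod 2) for t_i <= q <= j_i, so along it
   bit i of x changes at most (t_i mod 2) + j_i - t_i times; consecutive distinct
   numbers differ in some bit, so its length is at most the total number of bit
   changes.  Conversely, inflating an optimal common subsequence for the prefixes
   of alpha up to j_i/2 and appending 2s + sum_(u <= t, j_u odd) 2^u for every t
   with j_t odd attains the bound. *)

Lemma subseq_cat_take_drop (T : eqType) (s u w : seq T) :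
  subseq s (u ++ w) -> exists n, subseq (take n s) u /\ subseq (drop n s) w.
Proof.
case/subseqP=> m sz_m ->; rewrite -(cat_take_drop (size u) m).
have sz_mu : size (take (size u) m) = size u by rewrite size_takel // sz_m size_cat leq_addr.
exists (size (mask (take (size u) m) u)); rewrite mask_cat //.
by rewrite take_size_cat // drop_size_cat // !mask_subseq.
Qed.

Lemma subseq_cat_sep (T : eqType) (p : pred T) (l h u w : seq T) :
  all p l -> all (predC p) h -> all p u -> all (predC p) w ->
  subseq (l ++ h) (u ++ w) -> subseq l u /\ subseq h w.
Proof.
have filter_nil q (v : seq T) : all (predC q) v -> filter q v = [::].
  by rewrite all_predC has_filter negbK => /eqP.
move=> pl ph pu pw sub; split.
  have : subseq l (filter p (u ++ w)).
    by rewrite subseq_filter pl (subseq_trans (prefix_subseq _ _) sub).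
  by rewrite filter_cat (all_filterP pu) filter_nil ?cats0.
have : subseq h (filter (predC p) (u ++ w)).
  by rewrite subseq_filter ph (subseq_trans (suffix_subseq _ _) sub).
rewrite filter_cat (all_filterP pw) filter_nil //.
by apply: sub_all pu => x /= ->.
Qed.

Lemma sorted_subset_subseq (T : eqType) (r : rel T) (X Y : seq T) :
  irreflexive r -> transitive r -> sorted r X -> sorted r Y ->
  {subset X <= Y} -> subseq X Y.
Proof.
move=> irr tr sX sY XY; apply/(subseq_uniqP (sorted_uniq tr irr sY)).
apply: (irr_sorted_eq tr irr sX (sorted_filter tr _ sY)) => x.
by rewrite mem_filter; case: (boolP (x \in X)) => // /XY ->.
Qed.

Lemma subseq_flatten_pairs (T : eqType) (v X : seq T) :
  sorted (fun x y => x != y) v -> subseq v (flatten [seq [:: a; a] | a <- X]) ->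
  subseq v X.
Proof.
elim: X v => [|a X IHX] [|b v] // sorted_bv; rewrite [flatten _]/= /=.
have [<-|/negbTE neq_ba] := eqVneq b a; last by rewrite neq_ba; apply: IHX.
case: v sorted_bv => [|c v]; rewrite ?sub0seq //= => /andP[neq_ac sorted_cv].
by rewrite eq_sym (negbTE neq_ac); apply: IHX.
Qed.

Definition bitn (i x : nat) : bool := odd (x %/ 2 ^ i).

Lemma bitn0 i : bitn i 0 = false.
Proof. by rewrite /bitn div0n. Qed.

Lemma bitn_neq k x y : x < 2 ^ k -> y < 2 ^ k -> x != y ->
  exists i : 'I_k, bitn i x != bitn i y.
Proof.
elim: k x y => [|k IHk] x y; first by rewrite !ltnS !leqn0 => /eqP-> /eqP->.
move=> ltx lty neq_xy; have [odd_xy|odd_xy] := eqVneq (odd x) (odd y); last first.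
  by exists ord0; rewrite /bitn !divn1.
have lt_half z : z < 2 ^ k.+1 -> z./2 < 2 ^ k.
  by rewrite -divn2 ltn_divLR // -expnSr.
have [|i neq_i] := IHk _ _ (lt_half _ ltx) (lt_half _ lty).
  apply: contra neq_xy => /eqP eq_half.
  by rewrite -[x]odd_double_half -[y]odd_double_half eq_half odd_xy.
by exists (lift ord0 i); rewrite /bitn lift0 expnS !divnMA !divn2.
Qed.

Fixpoint switches (b : bool) (bs : seq bool) : nat :=
  if bs is c :: bs' then (b != c) + switches c bs' else 0.

Lemma switches_triangle b c bs : switches b bs <= (b != c) + switches c bs.
Proof.
case: bs => [|d bs] //=.
by rewrite addnA leq_add2r; case: b; case: c; case: d.
Qed.

Lemma switches_subseq b u w : subseq u w -> switches b u <= switches b w.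
Proof.
elim: w u b => [|c w IHw] [|d u] b //; rewrite [subseq _ _]/=.
case: eqP => [-> /IHw le_uw|_ /IHw le_uw]; first by rewrite /= leq_add2l.
apply: leq_trans (switches_triangle _ c _) _.
by rewrite [switches b _]/= leq_add2l.
Qed.

Lemma switches_flatten_nseq (f : bool -> nat) b bs :
  switches b (flatten [seq nseq (f c) c | c <- bs]) <= switches b bs.
Proof.
elim: bs b => [|c bs IHbs] b //=.
have switches_nseq n v : switches c (nseq n c ++ v) = switches c v.
  by elim: n => //= n ->; rewrite eqxx.
case: (f c) => [|n] /=; last by rewrite switches_nseq leq_add2l.
exact: leq_trans (IHbs b) (switches_triangle _ c _).
Qed.

Lemma switches_iota_odd a n : switches (odd a) [seq odd q | q <- iota a.+1 n] = n.
Proof. by elim: n a => //= n IHn a; move: (IHn a.+1) => /= ->; case: (odd a). Qed.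

Lemma size_le_switches k p X :
  path (fun x y => x != y) p X -> all (fun x => x < 2 ^ k) (p :: X) ->
  size X <= \sum_(i < k) switches (bitn i p) (map (bitn i) X).
Proof.
elim: X p => [|y X IHX] p //= /andP[neq_py pathX] /and3P[ltp lty ltX].
rewrite big_split -add1n; apply: leq_add; last by rewrite IHX //= lty.
have [i neq_i] := bitn_neq ltp lty neq_py.
by rewrite (bigD1 i) //= neq_i.
Qed.

Fixpoint nat_of_bits (r : nat -> bool) (n : nat) : nat :=
  if n is n'.+1 then r n' * 2 ^ n' + nat_of_bits r n' else 0.

Lemma nat_of_bits_lt (r : nat -> bool) n : nat_of_bits r n < 2 ^ n.
Proof.
elim: n => //= n IHn; rewrite expnS mul2n -addnn.
by case: (r n); rewrite ?mul1n ?add0n ?ltn_add2l // (leq_trans IHn) ?leq_addr.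
Qed.

Lemma nat_of_bits_ge (r : nat -> bool) t : r t -> 2 ^ t <= nat_of_bits r t.+1.
Proof. by move=> /= ->; rewrite mul1n leq_addr. Qed.

Lemma bitn_nat_of_bits (r : nat -> bool) n i : bitn i (nat_of_bits r n) = (i < n) && r i.
Proof.
elim: n => [|n IHn] /=; first by rewrite /bitn div0n.
rewrite /bitn; case: (ltngtP i n) => [lt_in|lt_ni|->].
- rewrite ltnS (ltnW lt_in); move: IHn; rewrite /bitn lt_in => <-.
  have -> : 2 ^ n = 2 ^ (n - i) * 2 ^ i by rewrite -expnD subnK // ltnW.
  by rewrite mulnA divnMDl ?expn_gt0 // oddD oddM oddX subn_eq0 leqNgt lt_in andbF.
- rewrite ltnS leqNgt lt_ni divn_small //.
  exact: leq_trans (nat_of_bits_lt r n.+1) (leq_pexp2l _ lt_ni).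
- by rewrite ltnSn divnMDl ?expn_gt0 // divn_small ?nat_of_bits_lt // addn0; case: (r n).
Qed.

Definition Tnat (k i : nat) (b : bool) : seq nat :=
  [seq x <- iota 1 (2 ^ k - 1) | bitn i x == b].

Lemma mem_Tnat k i b x : (x \in Tnat k i b) = [&& 0 < x < 2 ^ k & bitn i x == b].
Proof.
rewrite mem_filter mem_iota andbC; congr (_ && _).
by have := expn_gt0 2 k; lia.
Qed.

Lemma sorted_Tnat k i b : sorted ltn (Tnat k i b).
Proof. exact: sorted_filter ltn_trans _ _ (iota_ltn_sorted _ _). Qed.

Lemma subseq_Tnat k i b X : sorted ltn X ->
  all (fun x => [&& 0 < x < 2 ^ k & bitn i x == b]) X -> subseq X (Tnat k i b).
Proof.
move=> sorted_X /allP X_in.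
apply: sorted_subset_subseq ltnn ltn_trans sorted_X (sorted_Tnat _ _ _) _.
by move=> x /X_in; rewrite mem_Tnat.
Qed.

Lemma map_bitn_Tnat k i b : map (bitn i) (Tnat k i b) = nseq (size (Tnat k i b)) b.
Proof.
rewrite -(size_map (bitn i)); apply/all_pred1P; rewrite all_map.
by apply/allP => x; rewrite mem_Tnat => /andP[].
Qed.

Lemma switches_Tnat_blocks k i t j X : t <= j ->
  subseq X (flatten [seq Tnat k i (odd q) | q <- index_iota t j.+1]) ->
  switches false (map (bitn i) X) <= odd t + (j - t).
Proof.
move=> le_tj /(map_subseq (bitn i)) /(switches_subseq false) /leq_trans; apply.
rewrite map_flatten -map_comp (eq_map (fun q => map_bitn_Tnat k i (odd q))).
rewrite (map_comp (fun c => nseq (size (Tnat k i c)) c) odd).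
apply: leq_trans (switches_flatten_nseq _ _ _) _.
by rewrite /index_iota subSn //= switches_iota_odd; case: (odd t).
Qed.

Lemma sorted_nat_of_bits (r : nat -> bool) (Q : seq nat) :
  sorted ltn Q -> all r Q -> sorted ltn [seq nat_of_bits r t.+1 | t <- Q].
Proof.
move=> sorted_Q r_Q; apply: (homo_sorted_in (P := r)) r_Q sorted_Q.
move=> t t' _ r_t' lt_tt'; apply: leq_trans (nat_of_bits_lt r t.+1) _.
exact: leq_trans (leq_pexp2l _ lt_tt') (nat_of_bits_ge r_t').
Qed.

Lemma nat_of_bits_subseq_Tnat k i b (r : nat -> bool) (Q : seq nat) :
  sorted ltn Q -> all (fun t => r t && (t < k)) Q ->
  {in Q, forall t, (i <= t) && r i = b} ->
  subseq [seq nat_of_bits r t.+1 | t <- Q] (Tnat k i b).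
Proof.
move=> sorted_Q /allP Q_ok bits_Q; apply: subseq_Tnat.
  by apply: sorted_nat_of_bits sorted_Q _; apply/allP => t /Q_ok /andP[].
apply/allP => _ /mapP[t tQ ->]; have /andP[r_t lt_tk] := Q_ok t tQ.
rewrite bitn_nat_of_bits ltnS bits_Q // eqxx andbT.
have := nat_of_bits_ge r_t; have := nat_of_bits_lt r t.+1.
have := expn_gt0 2 t; have : 2 ^ t.+1 <= 2 ^ k by rewrite leq_exp2l.
lia.
Qed.

Lemma witness_subseq_Tnat k i (r : nat -> bool) : i < k ->
  subseq [seq nat_of_bits r t.+1 | t <- iota 0 k & r t]
         (Tnat k i false ++ (if r i then Tnat k i true else [::])).
Proof.
move=> lt_ik.
have sorted_r m n : sorted ltn [seq t <- iota m n | r t].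
  exact: sorted_filter ltn_trans _ _ (iota_ltn_sorted _ _).
have ok_r m n : m + n <= k -> all (fun t => r t && (t < k)) [seq t <- iota m n | r t].
  move=> le_k; apply/allP => t; rewrite mem_filter mem_iota => /and3P[-> _ lt_t] /=.
  exact: leq_trans lt_t le_k.
case r_i: (r i); last first.
  by rewrite cats0; apply: nat_of_bits_subseq_Tnat => [||t _]; rewrite ?sorted_r ?ok_r ?r_i ?andbF.
have -> : iota 0 k = iota 0 i ++ iota i (k - i) by rewrite -iotaD subnKC // ltnW.
rewrite filter_cat map_cat; apply: cat_subseq; apply: nat_of_bits_subseq_Tnat;
  rewrite ?sorted_r ?ok_r ?subnKC ?(ltnW lt_ik) //.
  by move=> t; rewrite mem_filter mem_iota => /and3P[_ _ lt_ti]; rewrite leqNgt lt_ti.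
by move=> t; rewrite mem_filter mem_iota => /and3P[_ le_it _]; rewrite le_it r_i.
Qed.

Local Open Scope ring_scope.

Lemma inflate_cons (a : int) (A : seq int) :
  inflate (a :: A) = 2 * a - 1 :: 2 * a :: inflate A.
Proof. by []. Qed.

Lemma inflate_cat (A B : seq int) : inflate (A ++ B) = inflate A ++ inflate B.
Proof. by rewrite /inflate map_cat flatten_cat. Qed.

Lemma size_inflate (A : seq int) : size (inflate A) = (2 * size A)%N.
Proof. by elim: A => // a A IHA; rewrite inflate_cons /= IHA mulnS. Qed.

Lemma all_inflate (P : pred int) (A : seq int) :
  all P (inflate A) = all (fun a => P (2 * a - 1) && P (2 * a)) A.
Proof. by elim: A => // a A IHA; rewrite inflate_cons /= IHA andbA. Qed.

Lemma inflate_subseq (A B : seq int) : subseq A B -> subseq (inflate A) (inflate B).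
Proof.
elim: B A => [|b B IHB] [|a A] // sub_AB.
move: sub_AB => /=; case: eqP => [-> /IHB|_ /IHB] sub_inflate.
  exact: (cat_subseq (subseq_refl [:: 2 * b - 1; 2 * b]) sub_inflate).
exact: subseq_trans sub_inflate (suffix_subseq [:: 2 * b - 1; 2 * b] _).
Qed.

Lemma sorted_inflate (A : seq int) : sorted <%R A -> sorted <%R (inflate A).
Proof.
have path_inflate a A' : path <%R a A' -> path <%R (2 * a) (inflate A').
  by elim: A' a => //= b A' IHA a /andP[lt_ab /IHA] /= ->; rewrite andbT; apply/andP; lia.
by case: A => //= a A /path_inflate /= ->; rewrite andbT; lia.
Qed.

Definition half_up (v : int) : int := ((v + 1) %/ 2)%Z.

Lemma map_half_up_inflate (A : seq int) :
  map half_up (inflate A) = flatten [seq [:: a; a] | a <- A].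
Proof. by elim: A => //= a A <-; rewrite /half_up; congr [:: _, _ & _]; lia. Qed.

Lemma sorted_undup_half_up (l : seq int) :
  sorted <%R l -> sorted <%R (undup (map half_up l)).
Proof.
rewrite !lt_sorted_uniq_le undup_uniq => /andP[_ sorted_l] /=.
apply: (subseq_sorted _ (undup_subseq _)); first exact: le_trans.
by apply: homo_sorted sorted_l => x y; rewrite /half_up; lia.
Qed.

Lemma subseq_undup_half_up (l X : seq int) :
  sorted <%R l -> subseq l (inflate X) -> subseq (undup (map half_up l)) X.
Proof.
move=> sorted_l sub_l; apply: subseq_flatten_pairs.
  by apply: sub_sorted (sorted_undup_half_up sorted_l) => x y /lt_eqF ->.
rewrite -map_half_up_inflate.
exact: subseq_trans (undup_subseq _) (map_subseq _ sub_l).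
Qed.

Lemma size_le_undup_half_up (l : seq int) :
  uniq l -> (size l <= 2 * size (undup (map half_up l)))%N.
Proof.
move=> uniq_l; rewrite -size_inflate; apply: uniq_leq_size => // v lv.
apply/flatten_mapP; exists (half_up v); first by rewrite mem_undup map_f.
by rewrite !inE /half_up; apply/orP; lia.
Qed.

Lemma prefix_blocks0 (blk : nat -> seq int) : prefix_blocks blk 0 = blk 0.
Proof. by rewrite /prefix_blocks /= cats0. Qed.

Lemma prefix_blocksS (blk : nat -> seq int) j :
  prefix_blocks blk j.+1 = prefix_blocks blk j ++ blk j.+1.
Proof. by rewrite /prefix_blocks -addn1 iotaD map_cat flatten_cat /= cats0. Qed.

Lemma prefix_blocks_subseq (blk : nat -> seq int) m n : (m <= n)%N ->
  subseq (prefix_blocks blk m) (prefix_blocks blk n).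
Proof.
move/subnK <-; elim: (n - m)%N => // d IHd.
by rewrite addSn prefix_blocksS (subseq_trans IHd) ?prefix_subseq.
Qed.

Lemma mem_prefix_blocks (blk : nat -> seq int) q j x : (q <= j)%N ->
  x \in blk q -> x \in prefix_blocks blk j.
Proof. by move=> le_qj xq; apply/flatten_mapP; exists q; rewrite // mem_iota ltnS. Qed.

Lemma subseq_prefix_blocks_sep (p : pred int) (blk L H : nat -> seq int) j l h :
  (forall q, blk q = L q ++ H q) ->
  (forall q, (q <= j)%N -> all p (L q)) -> (forall q, all (predC p) (H q)) ->
  all p l -> all (predC p) h ->
  subseq (l ++ h) (prefix_blocks blk j) ->
  exists2 t, (t <= j)%N &
    subseq l (prefix_blocks L t) /\ subseq h (flatten [seq H q | q <- index_iota t j.+1]).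
Proof.
move=> blkE; elim: j l h => [|j IHj] l h pL pH pl ph.
  rewrite prefix_blocks0 blkE => /(subseq_cat_sep pl ph (pL 0%N isT) (pH 0%N)) [sub_l sub_h].
  by exists 0%N; rewrite // prefix_blocks0 /index_iota /= cats0.
have pLj q : (q <= j)%N -> all p (L q) by move=> le_qj; apply/pL/leqW.
rewrite prefix_blocksS blkE => /subseq_cat_take_drop [n []].
rewrite take_cat drop_cat; case: ltnP => [lt_nl|le_ln] sub_pre sub_last.
  move: pl; rewrite -(cat_take_drop n l) all_cat => /andP[pl1 pl2].
  have := IHj _ [::] pLj pH pl1 isT; rewrite cats0 => /(_ sub_pre) [t le_tj [sub_take _]].
  have [sub_drop sub_h] := subseq_cat_sep pl2 ph (pL _ (leqnn _)) (pH _) sub_last.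
  exists j.+1 => //; split; last by rewrite /index_iota subSnn /= cats0.
  rewrite prefix_blocksS cat_subseq //.
  exact: subseq_trans sub_take (prefix_blocks_subseq _ le_tj).
set n' := (n - size l)%N in sub_pre sub_last *.
move: ph; rewrite -(cat_take_drop n' h) all_cat => /andP[ph1 ph2].
have [t le_tj [sub_l sub_take]] := IHj _ _ pLj pH pl ph1 sub_pre.
have [_ sub_drop] := subseq_cat_sep (l := [::]) isT ph2 (pL _ (leqnn _)) (pH _) sub_last.
exists t; first exact: leqW.
split => //.
have -> : index_iota t j.+2 = index_iota t j.+1 ++ [:: j.+1].
  by rewrite /index_iota (subSn (leqW le_tj)) -addn1 iotaD subnKC ?(leqW le_tj).
rewrite map_cat flatten_cat /= cats0.
by have := cat_subseq sub_take sub_drop; rewrite cat_take_drop.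
Qed.

Lemma sorted_cat_threshold (c : int) (u w : seq int) :
  sorted <%R u -> sorted <%R w ->
  all (fun v => v <= c) u -> all (fun v => c < v) w -> sorted <%R (u ++ w).
Proof.
rewrite !(sorted_pairwise lt_trans) pairwise_cat => -> -> u_le w_gt.
rewrite !andbT; apply/allrelP => x y /(allP u_le) x_le /(allP w_gt).
exact: le_lt_trans.
Qed.

Lemma filter_threshold_cat (c : int) (S : seq int) : sorted <%R S ->
  [seq v <- S | v <= c] ++ [seq v <- S | c < v] = S.
Proof.
move=> sorted_S; apply: lt_sorted_eq => //.
  by apply: (sorted_cat_threshold (c := c)); rewrite ?filter_all ?sorted_filter //; exact: lt_trans.
by move=> v; rewrite mem_cat !mem_filter -andb_orl; case: (leP v c).
Qed.

Lemma all_Tseq_gt k s i b : all (fun v => 2 * s < v) (Tseq k s i b).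
Proof.
apply/allP => v /mapP[x]; rewrite mem_filter mem_iota => /and3P[_ x_gt0 _] ->; lia.
Qed.

Lemma map_unshift_Tseq k (s : int) i b :
  [seq absz (v - 2 * s)%R | v <- Tseq k s i b] = Tnat k i b.
Proof. by rewrite -map_comp; apply: map_id_in => x _ /=; lia. Qed.

Lemma size_le_switches_shift k (c : int) (h : seq int) :
  sorted <%R h -> all (fun v => c < v) h ->
  all (fun x => x < 2 ^ k)%N [seq absz (v - c) | v <- h] ->
  (size h <= \sum_(i < k) switches false (map (bitn i) [seq absz (v - c) | v <- h]))%N.
Proof.
move=> sorted_h h_gt lt_h; rewrite -(size_map (fun v => absz (v - c))).
have : sorted ltn (map (fun v => absz (v - c)) (c :: h)).
  apply: (homo_sorted_in (P := [pred v | c <= v]) (e := <%R)) => [x y|/=|/=].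
  - by rewrite !inE => x_ge y_ge; lia.
  - by rewrite lexx; apply: sub_all h_gt => v; apply: ltW.
  - by rewrite path_min_sorted.
have neq_of_lt : subrel ltn (fun x y => x != y) by move=> x y /ltn_eqF ->.
rewrite /= subrr absz0 => /(sub_path neq_of_lt) path_X.
apply: leq_trans (size_le_switches (k := k) path_X _) _; first by rewrite /= expn_gt0.
by apply: leq_sum => i _; rewrite bitn0.
Qed.

Section Beta.

Variables (k : nat) (s : int) (a : nat -> seq int) (i : nat).

Definition beta_low (q : nat) : seq int := if odd q then [::] else inflate (a q./2).

Lemma betaE q : beta k s a i q = beta_low q ++ Tseq k s i (odd q).
Proof. by rewrite /beta /beta_low; case: (odd q). Qed.

Lemma prefix_blocks_beta_low t : prefix_blocks beta_low t = inflate (prefix_blocks a t./2).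
Proof.
elim: t => [|t IHt]; first by rewrite !prefix_blocks0.
rewrite prefix_blocksS IHt /beta_low /= uphalf_half; case: (odd t) => /=.
  by rewrite prefix_blocksS inflate_cat.
by rewrite cats0.
Qed.

Lemma subseq_prefix_beta j :
  subseq (inflate (prefix_blocks a j./2) ++ Tseq k s i false ++
          (if odd j then Tseq k s i true else [::]))
         (prefix_blocks (beta k s a i) j).
Proof.
elim: j => [|j IHj]; first by rewrite !prefix_blocks0 cats0.
rewrite prefix_blocksS betaE /beta_low oddS -[j.+1./2]/(uphalf j) uphalf_half.
case: (odd j) IHj => IHj; rewrite [~~ _]/= ?add0n ?add1n.
  rewrite prefix_blocksS inflate_cat cats0 -catA cat_subseq //.
  exact: subseq_trans (prefix_subseq _ _) IHj.
by rewrite cat0s catA cat_subseq // -(cats0 (_ ++ _)) -catA.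
Qed.

Lemma subseq_prefix_beta_sep j (l h : seq int) :
  (forall q, (q <= j./2)%N -> all (fun v => v <= s) (a q)) ->
  all (fun v => v <= 2 * s) l -> all (fun v => 2 * s < v) h ->
  subseq (l ++ h) (prefix_blocks (beta k s a i) j) ->
  exists2 t, (t <= j)%N &
    subseq l (inflate (prefix_blocks a t./2)) /\
    subseq [seq absz (v - 2 * s)%R | v <- h]
           (flatten [seq Tnat k i (odd q) | q <- index_iota t j.+1]).
Proof.
move=> a_le l_le h_gt sub_lh.
have low_le q : (q <= j)%N -> all (fun v => v <= 2 * s) (beta_low q).
  rewrite /beta_low; case: (odd q) => // le_qj; rewrite all_inflate.
  by apply/allP => v /(allP (a_le _ (half_leq le_qj))) v_le; apply/andP; lia.
have gtE (w : seq int) : all (fun v => 2 * s < v) w = all (predC (fun v => v <= 2 * s)) w.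
  by apply: eq_all => v; rewrite /= ltNge.
have high_gt q : all (predC (fun v => v <= 2 * s)) (Tseq k s i (odd q)).
  by rewrite -gtE all_Tseq_gt.
rewrite gtE in h_gt.
have [t le_tj [sub_l sub_h]] := subseq_prefix_blocks_sep betaE low_le high_gt l_le h_gt sub_lh.
exists t; first exact: le_tj.
split; first by rewrite -prefix_blocks_beta_low.
have -> : flatten [seq Tnat k i (odd q) | q <- index_iota t j.+1] =
    [seq absz (v - 2 * s)%R | v <- flatten [seq Tseq k s i (odd q) | q <- index_iota t j.+1]].
  by rewrite map_flatten -map_comp; apply/congr1/eq_map => q; rewrite /= map_unshift_Tseq.
exact: map_subseq.
Qed.

End Beta.

Lemma common_incr_subseq_enum n (F : 'I_n -> seq int) (S : seq int) :
  common_incr_subseq [seq F i | i <- enum 'I_n] S <->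
  sorted <%R S /\ forall i, subseq S (F i).
Proof.
rewrite /common_incr_subseq all_map; split=> [] [sorted_S sub_S]; split=> //.
  by move=> i; apply: (allP sub_S); rewrite mem_enum.
by apply/allP => i _; apply: sub_S.
Qed.

Section LcisBeta.

Variables (k N : nat) (alpha : 'I_k -> nat -> seq int) (s : int) (js : 'I_k -> nat).
Hypothesis k_gt0 : (0 < k)%N.
Hypothesis lcis_alpha : forall ms : 'I_k -> nat, (forall i, ms i < N)%N ->
  lcis_is [seq prefix_blocks (alpha i) (ms i) | i <- enum 'I_k] (\sum_(i < k) ms i + N).
Hypothesis alpha_le : forall i x, x \in prefix_blocks (alpha i) N.-1 -> x <= s.
Hypothesis js_lt : forall i, (js i < 2 * N)%N.

Let i0 : 'I_k := Ordinal k_gt0.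

Lemma half_js_lt i : ((js i)./2 < N)%N.
Proof. by rewrite -divn2 ltn_divLR // mulnC js_lt. Qed.

Lemma prefix_alpha_le i m x : (m < N)%N -> x \in prefix_blocks (alpha i) m -> x <= s.
Proof.
move=> lt_mN x_m; apply: (alpha_le (i := i)).
by apply: mem_subseq x_m; apply: prefix_blocks_subseq; lia.
Qed.

Lemma alpha_block_le i q : (q <= (js i)./2)%N -> all (fun v => v <= s) (alpha i q).
Proof.
move=> le_q; apply/allP => x x_q.
apply: (prefix_alpha_le (leq_ltn_trans le_q (half_js_lt i))).
exact: mem_prefix_blocks x_q.
Qed.

Lemma lcis_beta_witness :
  exists2 S, common_incr_subseq [seq prefix_blocks (beta k s (alpha i) i) (js i) | i <- enum 'I_k] S
           & size S = (\sum_(i < k) js i + 2 * N)%N.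
Proof.
have [[c [/common_incr_subseq_enum [sorted_c sub_c] size_c]] _] := lcis_alpha half_js_lt.
pose r t := if insub t is Some i then odd (js i) else false.
have rE (i : 'I_k) : r i = odd (js i) by rewrite /r valK.
pose X := [seq nat_of_bits r t.+1 | t <- iota 0 k & r t].
have sub_X (i : 'I_k) : subseq [seq 2 * s + x%:Z | x <- X]
    (Tseq k s i false ++ (if odd (js i) then Tseq k s i true else [::])).
  have := map_subseq (fun x : nat => 2 * s + x%:Z) (witness_subseq_Tnat r (ltn_ord i)).
  by rewrite rE map_cat; case: (odd (js i)).
exists (inflate c ++ [seq 2 * s + x%:Z | x <- X]); last first.
  rewrite size_cat size_inflate size_c !size_map size_filter.
  have -> : count r (iota 0 k) = (\sum_(i < k) odd (js i))%N.
    have -> : iota 0 k = index_iota 0 k by rewrite /index_iota subn0.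
    rewrite -sum1_count big_mkord big_mkcond.
    by apply: eq_bigr => i _; rewrite rE; case: (odd (js i)).
  have sum_js : (\sum_(i < k) js i = 2 * \sum_(i < k) (js i)./2 + \sum_(i < k) odd (js i))%N.
    rewrite big_distrr -big_split; apply: eq_bigr => i _ /=.
    by rewrite -{1}(odd_double_half (js i)) -mul2n addnC.
  lia.
apply/common_incr_subseq_enum; split; last first.
  move=> i; apply: subseq_trans (subseq_prefix_beta _ _ _ _ _).
  by rewrite cat_subseq ?inflate_subseq ?sub_X.
apply: (sorted_cat_threshold (c := 2 * s)); first exact: sorted_inflate.
- apply: (homo_sorted (e := ltn)); first by move=> x y; lia.
  apply: sorted_nat_of_bits; last exact: filter_all.
  exact: sorted_filter ltn_trans _ _ (iota_ltn_sorted _ _).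
- rewrite all_inflate; apply/allP => v /(mem_subseq (sub_c i0)).
  by move/(prefix_alpha_le (half_js_lt i0)) => v_le; apply/andP; lia.
- apply/allP => v /(mem_subseq (sub_X i0)); rewrite mem_cat => /orP[|].
    by move/(allP (all_Tseq_gt _ _ _ _)).
  by case: (odd (js i0)) => // /(allP (all_Tseq_gt _ _ _ _)).
Qed.

Lemma lcis_beta_bound S :
  common_incr_subseq [seq prefix_blocks (beta k s (alpha i) i) (js i) | i <- enum 'I_k] S ->
  (size S <= \sum_(i < k) js i + 2 * N)%N.
Proof.
case/common_incr_subseq_enum => sorted_S sub_S.
set l : seq int := [seq v <- S | v <= 2 * s].
set h : seq int := [seq v <- S | 2 * s < v].
have S_lh : S = l ++ h by rewrite filter_threshold_cat.
have sorted_l : sorted <%R l := sorted_filter lt_trans _ sorted_S.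
have sorted_h : sorted <%R h := sorted_filter lt_trans _ sorted_S.
have ex_t i : exists t, [/\ (t <= js i)%N,
    subseq l (inflate (prefix_blocks (alpha i) t./2)) &
    subseq [seq absz (v - 2 * s)%R | v <- h]
           (flatten [seq Tnat k i (odd q) | q <- index_iota t (js i).+1])].
  have := sub_S i; rewrite {1}S_lh.
  case/(subseq_prefix_beta_sep (alpha_block_le (i := i)) (filter_all _ _) (filter_all _ _)).
  by move=> t le_t [sub_l sub_h]; exists t.
have [ts /all_and3[le_ts sub_l sub_h]] := fin_all_exists ex_t.
have size_l : (size l <= 2 * (\sum_(i < k) (ts i)./2 + N))%N.
  apply: leq_trans (size_le_undup_half_up (sorted_uniq lt_trans ltxx sorted_l)) _.
  have half_ts_lt i : ((ts i)./2 < N)%N.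
    exact: leq_ltn_trans (half_leq (le_ts i)) (half_js_lt i).
  rewrite leq_mul2l; apply/orP; right; apply: (lcis_alpha half_ts_lt).2.
  apply/common_incr_subseq_enum; split; first exact: sorted_undup_half_up.
  by move=> i; apply: subseq_undup_half_up (sub_l i).
have size_h : (size h <= \sum_(i < k) (odd (ts i) + (js i - ts i)))%N.
  apply: leq_trans (size_le_switches_shift (k := k) sorted_h (filter_all _ _) _) _.
    apply/allP => x /(mem_subseq (sub_h i0)) /flatten_mapP[q _].
    by rewrite mem_Tnat => /andP[/andP[]].
  by apply: leq_sum => i _; apply: switches_Tnat_blocks (le_ts i) (sub_h i).
have sum_js : (\sum_(i < k) js i =
    2 * \sum_(i < k) (ts i)./2 + \sum_(i < k) (odd (ts i) + (js i - ts i)))%N.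
  rewrite big_distrr -big_split; apply: eq_bigr => i _ /=.
  by have := le_ts i; have := odd_double_half (ts i); rewrite -mul2n; lia.
have size_S : size S = (size l + size h)%N by rewrite -size_cat -S_lh.
lia.
Qed.

End LcisBeta.

Theorem lemma13 (k N : nat) (alpha : 'I_k -> nat -> seq int) (s : int) :
  (2 <= k)%N ->
  (exists e : nat, N = (2 ^ e)%N) ->
  (forall js : 'I_k -> nat, (forall i, (js i < N)%N) ->
     lcis_is [seq prefix_blocks (alpha i) (js i) | i <- enum 'I_k]
             (\sum_(i < k) js i + N)%N) ->
  (* s is the largest element appearing in A_1, ..., A_k *)
  (exists i : 'I_k, s \in prefix_blocks (alpha i) N.-1) ->
  (forall (i : 'I_k) (x : int), x \in prefix_blocks (alpha i) N.-1 -> x <= s) ->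
  forall js : 'I_k -> nat, (forall i, (js i < 2 * N)%N) ->
     lcis_is [seq prefix_blocks (beta k s (alpha i) i) (js i) | i <- enum 'I_k]
             (\sum_(i < k) js i + 2 * N)%N.
Proof.
move=> k_ge2 _ lcis_alpha _ alpha_le js js_lt.
have k_gt0 : (0 < k)%N by apply: ltnW.
split; last exact: lcis_beta_bound k_gt0 lcis_alpha alpha_le js_lt.
have [S cis_S size_S] := lcis_beta_witness k_gt0 lcis_alpha alpha_le js_lt.
by exists S.
Qed.
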